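(* Consider the model and approximate SIR in the context with perfect coordination $p=0$ (so $\Omega=0$ almost surely) and $q\in(0,1]$. Then $$\mathbb{P}\left(\widetilde{\mathsf{SIR}}_L\ge\frac{\beta}{\gamma}\right)=1-\sum_{\ell=0}^{L-1}e^{-\frac{\alpha-2}{2q\beta/\gamma}}\frac{\left(\frac{\alpha-2}{2q\beta/\gamma}\right)^\ell}{\ell!}.$$
   Context: Let $\Phi$ be a homogeneous Poisson point process on $\mathbb{R}^2$ of intensity $\lambda>0$ (base station locations), user at the origin $o$; label the points in increasing distance as $x_1,x_2,\dots$ and set $R_L=\|x_L\|$ for a fixed integer $L\ge1$. Fix $\alpha>2$, $\gamma>0$, $\beta>0$, $q\in(0,1]$. With all other participating BSs silent, the approximate (interference-limited) SIR of the $L$-th BS, in which the interference from BSs beyond $x_L$ (each active with probability $q$) is replaced by its conditional mean given $R_L$, is $\widetilde{\mathsf{SIR}}_L=\frac{R_L^{-\alpha}}{\frac{2\pi q\lambda}{\alpha-2}R_L^{2-\alpha}}$. *)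

From HB Require Import structures.
From mathcomp Require Import all_boot all_order all_algebra.
From mathcomp Require Import all_classical all_reals all_analysis.
Set Implicit Arguments. Unset Strict Implicit. Unset Printing Implicit Defensive.
Import Order.TTheory GRing.Theory Num.Theory.
Import numFieldNormedType.Exports.
Local Open Scope classical_set_scope.
Local Open Scope ring_scope.

Section PPP.
Variable R : realType.

Definition leb2 := (@lebesgue_measure R \x @lebesgue_measure R)%E.

Definition eball (r : R) : set (R * R) :=
  [set x | x.1 ^+ 2 + x.2 ^+ 2 <= r ^+ 2].

Definition bounded2 (A : set (R * R)) : Prop :=
  exists M : R, forall x, A x -> x.1 ^+ 2 + x.2 ^+ 2 <= M.

(* N w A = number of points of the realisation w of the point process in A. *)
Definition is_hPPP (d : measure_display) (Omega : measurableType d)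
    (P : probability Omega R) (lam : R) (N : Omega -> set (R * R) -> nat) : Prop :=
  [/\ (forall A k, measurable A -> bounded2 A ->
         measurable [set w | N w A = k]),
      (forall w A B, measurable A -> measurable B -> bounded2 A -> bounded2 B ->
         A `&` B = set0 -> N w (A `|` B) = (N w A + N w B)%N),
      (forall A k, measurable A -> bounded2 A ->
         let m := lam * fine (leb2 A) in
         P [set w | N w A = k] = (expR (- m) * m ^+ k / (k`!)%:R)%:E) &
      (forall (n : nat) (A : 'I_n -> set (R * R)) (k : 'I_n -> nat),
         (forall i, measurable (A i) /\ bounded2 (A i)) ->
         (forall i j, i != j -> A i `&` A j = set0) ->
         P (\bigcap_(i in [set: 'I_n]) [set w | N w (A i) = k i]) =
         (\prod_(i < n) P [set w | N w (A i) = k i])%E)].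

Definition RL (d : measure_display) (Omega : measurableType d)
    (N : Omega -> set (R * R) -> nat) (L : nat) (w : Omega) : R :=
  inf [set r : R | 0 <= r /\ (L <= N w (eball r))%N].

Definition SIRt (alpha q lam RL_w : R) : R :=
  RL_w `^ (- alpha) / ((2 * pi * q * lam / (alpha - 2)) * RL_w `^ (2 - alpha)).

End PPP.

From HB Require Import structures.
From mathcomp Require Import all_boot all_order all_algebra.
From mathcomp Require Import all_classical all_reals all_analysis.
From mathcomp Require Import measurable_realfun lra ring.
Set Implicit Arguments. Unset Strict Implicit. Unset Printing Implicit Defensive.
Import Order.TTheory GRing.Theory Num.Theory.
Import numFieldNormedType.Exports.
Local Open Scope classical_set_scope.
Local Open Scope ring_scope.

(** For rho > 0 the approximate SIR is 1 / (c rho^2) with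
    c = 2 pi q lam / (alpha - 2), so SIRt >= beta / gamma iff
    0 < R_L <= r0 := sqrt (gamma / (beta c)), where lam pi r0^2 = t.  Up to
    null sets this is the event that the disc B(r0) contains at least L
    points, a Poisson(t) count.  The null sets arise because R_L is an
    infimum: {R_L <= a} is the intersection of the events
    {N(B(a + 1/n)) >= L}, and the annulus B(a + 1/n) \ B(a) is non-empty
    with probability at most lam pi (2a + 1) / n; for a = 0 this also shows
    that {R_L = 0} is null. *)

(* Unlike [poisson_pmf], no junk value for [m <= 0]: [N w A] is Poisson with
   mean 0 when [A] is Lebesgue-null. *)
Definition poisson_mass (R : realType) (m : R) (k : nat) : R :=
  expR (- m) * m ^+ k / (k`!)%:R.

Lemma le0_invS (R : realType) (C x : R) :
  0 < C -> (forall n : nat, x <= C / n.+1%:R) -> x <= 0.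
Proof.
move=> C0 xn; rewrite leNgt; apply/negP => x0; have := xn (Num.truncn (C / x)).
by apply/negP; rewrite -ltNge ltr_pdivrMr // mulrC -ltr_pdivrMr // truncnS_gt.
Qed.

Section disc_area.
Variable R : realType.
Implicit Types r s x : R.

Lemma eball_measurable r : measurable (eball r).
Proof.
have mf : measurable_fun setT (fun x : R * R => x.1 ^+ 2 + x.2 ^+ 2).
  by apply: measurable_funD; apply: measurable_funX; [exact: measurable_fst|exact: measurable_snd].
have := mf measurableT [set` `]-oo, r ^+ 2]] (measurable_itv _).
by rewrite setTI; congr measurable; apply/seteqP; split => x /=; rewrite in_itv.
Qed.

Lemma eball_bounded r : bounded2 (eball r).
Proof. by exists (r ^+ 2). Qed.

Lemma subset_eball r s : 0 <= r -> r <= s -> eball r `<=` eball s.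
Proof.
move=> r0 rs x; rewrite /eball /= => /le_trans; apply.
by rewrite lerXn2r ?nnegrE ?(le_trans r0).
Qed.

Lemma annulus_measurable r s : measurable (eball s `\` eball r).
Proof. by apply: measurableD; exact: eball_measurable. Qed.

Lemma annulus_bounded r s : bounded2 (eball s `\` eball r).
Proof. by exists (s ^+ 2) => x []. Qed.

Lemma lebesgue_measure_xsection_eball r x :
  lebesgue_measure (xsection (eball r) x) = (2 * Num.sqrt (r ^+ 2 - x ^+ 2))%:E.
Proof.
have [c0|c0] := leP 0 (r ^+ 2 - x ^+ 2); last first.
  rewrite ler0_sqrtr ?ltW // mulr0.
  have -> : xsection (eball r) x = set0; last exact: measure0.
  by apply/seteqP; split => y //=; rewrite /xsection /eball /= inE /=; nra.
set s := Num.sqrt (r ^+ 2 - x ^+ 2).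
have -> : xsection (eball r) x = [set` `[- s, s]].
  apply/seteqP; split => y /=; rewrite /xsection /eball /= in_itv /= -ler_norml;
  by rewrite inE /= -sqrtr_sqr /s ler_sqrt // lerBrDl addrC.
rewrite lebesgue_measure_itv /= lte_fin -EFinB opprK -mulr2n mulr_natl.
have s0 : 0 <= s by exact: sqrtr_ge0.
case: ltP => // sNs.
have -> : s = 0 by lra.
by rewrite mul0rn.
Qed.

Lemma leb2_eball_integral r : 0 <= r -> leb2 (eball r) =
  (\int[lebesgue_measure]_(x in `[(- r)%R, r]) ((2 * Num.sqrt (r ^+ 2 - x ^+ 2))%R)%:E)%E.
Proof.
move=> r0; rewrite /leb2 /product_measure1 /= [RHS]integral_mkcond.
apply: eq_integral => x _; rewrite lebesgue_measure_xsection_eball patchE.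
case: ifPn => // /negP; rewrite inE /= in_itv /= -ler_norml => /negP; rewrite -ltNge => rx.
by rewrite ler0_sqrtr ?mulr0 // subr_le0 -(real_normK (num_real x)); nra.
Qed.

Lemma derivable1_continuous (f : R -> R) x : derivable f x 1 -> {for x, continuous f}.
Proof. by move=> fx; apply: differentiable_continuous; apply/derivable1_diffP. Qed.

Lemma integral_cos2_halfpi (k : R) :
  (\int[lebesgue_measure]_(t in `[(- (pi / 2))%R, (pi / 2)%R]) ((k * cos t ^+ 2)%R)%:E)%E =
  (k * pi / 2)%:E.
Proof.
pose H t : R := k / 2 * (t + cos t * sin t).
have dH t : is_derive t (1 : R) H (k * cos t ^+ 2).
  apply: is_derive_eq.
  change (k / 2 * (1 + (cos t * cos t + sin t * - sin t)) = k * cos t ^+ 2).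
  by rewrite mulrN -!expr2 sin2cos2; field.
rewrite (@continuous_FTC2 _ _ H).
- by rewrite -EFinB /H cosN cos_pihalf !mul0r !addr0; congr (_%:E); field.
- by rewrite -subr_gt0 opprK -mulr2n mulrn_wgt0 // divr_gt0 ?pi_gt0.
- by apply: continuous_subspaceT => t; apply: derivable1_continuous; apply: ex_derive.
- split.
  + by move=> t _; apply: ex_derive.
  + by apply: cvg_at_right_filter; apply: derivable1_continuous; apply: ex_derive.
  + by apply: cvg_at_left_filter; apply: derivable1_continuous; apply: ex_derive.
- by move=> t _; rewrite derive1E derive_val.
Qed.

Lemma integral_semicircle r : 0 < r ->
  (\int[lebesgue_measure]_(x in `[(- r)%R, r]) ((2 * Num.sqrt (r ^+ 2 - x ^+ 2))%R)%:E)%E =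
  (\int[lebesgue_measure]_(t in `[(- (pi / 2))%R, (pi / 2)%R]) ((2 * r ^+ 2 * cos t ^+ 2)%R)%:E)%E.
Proof.
move=> r0; pose F t : R := r * sin t.
have dF t : is_derive t (1 : R) F (r * cos t) by apply: is_derive_eq.
have F' : derive1 F = fun t => r * cos t.
  by apply/funext => t; rewrite derive1E derive_val.
have Fcont t : {for t, continuous F} by apply: derivable1_continuous; apply: ex_derive.
have F'cont : continuous (fun t => r * cos t).
  by move=> t; apply: derivable1_continuous; apply: ex_derive.
have Gcont : continuous (fun x : R => 2 * Num.sqrt (r ^+ 2 - x ^+ 2)).
  move=> x; change {for x, continuous
    ((fun y : R => 2 * y) \o (Num.sqrt \o (fun x : R => r ^+ 2 - x ^+ 2)))}.
  apply: continuous_comp; last first.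
    by apply: derivable1_continuous; apply: ex_derive.
  apply: continuous_comp; last exact: sqrt_continuous.
  by apply: derivable1_continuous; apply: ex_derive.
have pi2 : 0 < pi / 2 :> R by rewrite divr_gt0 // pi_gt0.
have := @integration_by_substitution_increasing R F
  (fun x => 2 * Num.sqrt (r ^+ 2 - x ^+ 2)) (- (pi / 2)) (pi / 2).
rewrite /F sinN sin_pihalf mulrN1 mulr1 => ->; rewrite -/F ?F'.
- apply: eq_integral => t; rewrite inE /= in_itv /= => ht; congr (_%:E).
  change (2 * Num.sqrt (r ^+ 2 - (r * sin t) ^+ 2) * (r * cos t) = 2 * r ^+ 2 * cos t ^+ 2).
  have -> : r ^+ 2 - (r * sin t) ^+ 2 = (r * cos t) ^+ 2.
    by rewrite !exprMn cos2sin2 mulrBr mulr1.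
  rewrite sqrtr_sqr ger0_norm; first by rewrite !expr2; ring.
  by rewrite mulr_ge0 ?cos_ge0_pihalf // ltW.
- by rewrite -subr_ge0 opprK -mulr2n mulrn_wge0 // ltW.
- by move=> x y hx hy xy; rewrite /F ltr_pM2l // ltr_sin.
- by move=> t _; apply: F'cont.
- by apply/cvg_ex; eexists; apply: cvg_at_right_filter; apply: F'cont.
- by apply/cvg_ex; eexists; apply: cvg_at_left_filter; apply: F'cont.
- split; first by move=> x _; apply: ex_derive.
  + exact/cvg_at_right_filter/Fcont.
  + exact/cvg_at_left_filter/Fcont.
- exact: continuous_subspaceT.
Qed.

Lemma leb2_eball r : 0 <= r -> leb2 (eball r) = (pi * r ^+ 2)%:E.
Proof.
rewrite le_eqVlt => /predU1P [<-|r0].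
  rewrite leb2_eball_integral // expr2 !mulr0.
  under eq_integral => x _ do rewrite sub0r ler0_sqrtr ?mulr0 ?oppr_le0 ?sqr_ge0 //.
  exact: integral0.
rewrite leb2_eball_integral ?ltW // integral_semicircle // integral_cos2_halfpi.
by congr (_%:E); field.
Qed.

Lemma leb2_annulus r s : 0 <= r -> r <= s ->
  leb2 (eball s `\` eball r) = (pi * (s ^+ 2 - r ^+ 2))%:E.
Proof.
move=> r0 rs; have s0 : 0 <= s by exact: le_trans rs.
have := @measureU _ _ _ (@leb2 R) _ _ (eball_measurable r) (annulus_measurable r s)
  (setDIK _ _).
rewrite setDUK; last exact: subset_eball.
move=> split_s; have : (pi * s ^+ 2)%:E = (pi * r ^+ 2)%:E + leb2 (eball s `\` eball r).
  by rewrite -!leb2_eball //; exact: split_s.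
case: (leb2 _) => [x||] //= /eqP; rewrite -EFinD eqe => /eqP hx.
by congr (_%:E); rewrite mulrBr; lra.
Qed.

End disc_area.

Section upward_closed_inf.
Variable R : realType.
Variable S : set R.
Hypothesis S_ge0 : forall s, S s -> 0 <= s.
Hypothesis S_up : forall s t, S s -> s <= t -> S t.

Lemma upclosed_inf_leP (a : R) :
  S !=set0 /\ inf S <= a <-> forall n : nat, S (a + n.+1%:R^-1).
Proof.
have lbS : has_lbound S by exists 0.
split=> [[S0 Sa] n|Sa].
  have e0 : 0 < n.+1%:R^-1 :> R by rewrite invr_gt0 ltr0n.
  have [s Ss /ltW sa] := inf_adherent e0 (conj S0 lbS).
  by apply: S_up Ss _; apply: le_trans sa _; rewrite lerD2r.
split; first by exists (a + 1%:R^-1); exact: Sa 0%N.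
by rewrite -subr_le0; apply: (@le0_invS _ 1) => // n; rewrite div1r lerBlDl; exact: ge_inf.
Qed.

End upward_closed_inf.

Section approximate_SIR.
Variables (R : realType) (alpha q lam : R).
Let c := 2 * pi * q * lam / (alpha - 2).

Lemma SIRtE rho : 0 < rho -> SIRt alpha q lam rho = (c * rho ^+ 2)^-1.
Proof.
move=> rho0; rewrite /SIRt -/c.
have -> : rho `^ (- alpha) = rho `^ (2 - alpha) * (rho ^+ 2)^-1.
  rewrite -(powR_mulrn 2 (ltW rho0)) -powRN -powRD; first by congr (_ `^ _); ring.
  by apply/implyP => _; rewrite gt_eqF.
have y0 : rho `^ (2 - alpha) != 0 by rewrite gt_eqF // powR_gt0.
move: (rho `^ _) (rho ^+ 2) c y0 => y z k y0.
by rewrite mulrAC [k * y]mulrC invfM mulrA mulfV // mul1r -invfM.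
Qed.

Lemma SIRt0 : alpha != 0 -> SIRt alpha q lam 0 = 0.
Proof. by move=> a0; rewrite /SIRt powR0 ?oppr_eq0 // mul0r. Qed.

Lemma SIRt_geP beta gamma rho : 0 < alpha -> 0 < c -> 0 < beta -> 0 < gamma ->
  0 <= rho ->
  beta / gamma <= SIRt alpha q lam rho <-> 0 < rho /\ rho <= Num.sqrt (gamma / (beta * c)).
Proof.
move=> a0 c0 b0 g0; rewrite le_eqVlt => /predU1P [<-|rho0].
  rewrite SIRt0 ?gt_eqF // ltxx; split=> [|[]//].
  by rewrite leNgt divr_gt0.
have r2 : 0 < rho ^+ 2 by exact: exprn_gt0.
rewrite SIRtE //; move: c c0 => k k0.
rewrite -invf_div lef_pV2 ?posrE ?mulr_gt0 ?divr_gt0 ?invr_gt0 //.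
rewrite mulrC -ler_pdivlMr // invfM mulrA.
rewrite -(ler_sqrt _ (ltW _)) ?divr_gt0 ?invr_gt0 // sqrtr_sqr ger0_norm; last exact: ltW.
by split=> [|[]].
Qed.

End approximate_SIR.

Section null_sets.
Context d (T : measurableType d) (R : realType) (mu : {measure set T -> \bar R}).

Lemma measure_subset_setD0 (X Y : set T) : measurable X -> measurable Y ->
  X `<=` Y -> mu (Y `\` X) = 0%E -> mu X = mu Y.
Proof. by move=> mX mY XY YX0; rewrite -(setDUK XY) measureU0 //; exact: measurableD. Qed.

Lemma measure0_le_invS (A : set T) (C : R) : 0 < C ->
  (forall n : nat, (mu A <= (C / n.+1%:R)%:E)%E) -> mu A = 0%E.
Proof.
move=> C0 An; apply/eqP; rewrite eq_le measure_ge0 andbT.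
move: (An 0%N); case: (mu A) An => [x||] // An _; rewrite lee_fin.
by apply: (@le0_invS _ C) => // n; rewrite -lee_fin.
Qed.

End null_sets.

Section poisson_counts.
Context (R : realType) d (Omega : measurableType d) (P : probability Omega R).
Variables (lam : R) (N : Omega -> set (R * R) -> nat).
Hypothesis hP : is_hPPP P lam N.

Lemma count_measurable A k : measurable A -> bounded2 A ->
  measurable [set w | N w A = k].
Proof. by case: hP => mN _ _ _; exact: mN. Qed.

Lemma count_poisson A k : measurable A -> bounded2 A ->
  P [set w | N w A = k] = (poisson_mass (lam * fine (leb2 A)) k)%:E.
Proof. by case: hP => _ _ PN _; exact: PN. Qed.

Lemma count_eball_annulus w r s : 0 <= r -> r <= s ->
  N w (eball s) = (N w (eball r) + N w (eball s `\` eball r))%N.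
Proof.
move=> r0 rs; rewrite -{1}(setDUK (subset_eball r0 rs)).
case: hP => _ NU _ _; apply: NU; rewrite ?setDIK //.
- exact: eball_measurable.
- exact: annulus_measurable.
- exact: eball_bounded.
- exact: annulus_bounded.
Qed.

Lemma count_eball_le w r s : 0 <= r -> r <= s -> (N w (eball r) <= N w (eball s))%N.
Proof. by move=> r0 rs; rewrite (count_eball_annulus w r0 rs) leq_addr. Qed.

Lemma count_ge_measurable A k : measurable A -> bounded2 A ->
  measurable [set w | (k <= N w A)%N].
Proof.
move=> mA bA; have -> : [set w | (k <= N w A)%N] = \bigcup_i [set w | N w A = (i + k)%N].
  apply/seteqP; split => [w /= kN|w [i _ /= ->]]; last exact: leq_addl.
  by exists (N w A - k)%N; rewrite //= subnK.
by apply: bigcupT_measurable => i; exact: count_measurable.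
Qed.

Lemma prob_count_ge1 A : measurable A -> bounded2 A ->
  (P [set w | (1 <= N w A)%N] <= (lam * fine (leb2 A))%:E)%E.
Proof.
move=> mA bA; have -> : [set w | (1 <= N w A)%N] = ~` [set w | N w A = 0%N].
  by apply/seteqP; split => w /=; rewrite lt0n => /eqP.
rewrite probability_setC; last exact: count_measurable.
rewrite count_poisson // /poisson_mass.
rewrite expr0 mulr1 divr1 -EFinB lee_fin.
by have := expR_ge1Dx (- (lam * fine (leb2 A))); lra.
Qed.

Lemma prob_count_ge A n : measurable A -> bounded2 A ->
  P [set w | (n <= N w A)%N] = (1 - \sum_(l < n) poisson_mass (lam * fine (leb2 A)) l)%:E.
Proof.
move=> mA bA; pose E k := [set w | N w A = k].
have -> : [set w | (n <= N w A)%N] = ~` \big[setU/set0]_(k < n) E k.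
  rewrite -bigcup_mkord; apply/seteqP; split => w /=.
    by move=> + [k /= kL Ek]; rewrite Ek leqNgt kL.
  by move=> NE; rewrite leqNgt; apply/negP => NL; apply: NE; exists (N w A).
rewrite probability_setC; last by apply: bigsetU_measurable => k _; exact: count_measurable.
rewrite measure_bigsetU; last 2 first.
- by move=> k; exact: count_measurable.
- by move=> i j _ _ [w [+ +]]; rewrite /E /= => <- <-.
rewrite (eq_bigr (fun k : 'I_n => (poisson_mass (lam * fine (leb2 A)) k)%:E)).
  by rewrite sumEFin -EFinB.
by move=> k _; exact: count_poisson.
Qed.

Variable L : nat.
Let S w := [set r : R | 0 <= r /\ (L <= N w (eball r))%N].

Lemma RL_ge0 w : 0 <= RL N L w.
Proof.
have [S0|/set0P S0] := eqVneq (S w) set0; first by rewrite /RL -/(S w) S0 inf0.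
by apply: lb_le_inf => // s [].
Qed.

Definition RL_le_event (a : R) : set Omega :=
  \bigcap_n [set w | (L <= N w (eball (a + n.+1%:R^-1)))%N].

Lemma RL_le_eventP w a : 0 <= a ->
  RL_le_event a w <-> S w !=set0 /\ RL N L w <= a.
Proof.
move=> a0; rewrite (@upclosed_inf_leP _ (S w)) => [|s []//|s t [s0 Ls] st].
- split=> [Lw n|Sw n _]; last by case: (Sw n).
  by split; [rewrite addr_ge0 ?invr_ge0|exact: Lw].
- by split; [exact: le_trans st|exact: leq_trans Ls (count_eball_le w s0 st)].
Qed.

Lemma RL_le_event_measurable a : measurable (RL_le_event a).
Proof.
apply: bigcapT_measurable => n.
by apply: count_ge_measurable; [exact: eball_measurable|exact: eball_bounded].
Qed.

Hypothesis lam_gt0 : 0 < lam.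

Lemma prob_RL_le_event a : 0 <= a ->
  P (RL_le_event a) = P [set w | (L <= N w (eball a))%N].
Proof.
move=> a0; have mA := count_ge_measurable L (eball_measurable a) (eball_bounded a).
symmetry; apply: measure_subset_setD0 => //; first exact: RL_le_event_measurable.
  move=> w La n _; apply: leq_trans La (count_eball_le w a0 _).
  by rewrite lerDl invr_ge0.
apply: (@measure0_le_invS _ _ _ _ _ (lam * pi * (2 * a + 1))).
  by rewrite !mulr_gt0 ?pi_gt0 // ltr_wpDl // mulr_ge0.
move=> n; set e : R := n.+1%:R^-1.
have e0 : 0 < e by rewrite invr_gt0.
have e1 : e <= 1 by rewrite invf_le1 // ler1n.
have ae : a <= a + e by rewrite lerDl ltW.
have mB := annulus_measurable a (a + e); have bB := annulus_bounded a (a + e).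
apply: (@le_trans _ _ (P [set w | (1 <= N w (eball (a + e) `\` eball a))%N])).
  apply: le_measure; rewrite ?inE; first exact: measurableD (RL_le_event_measurable a) mA.
    exact: count_ge_measurable.
  move=> w [/(_ n I) /= Lw LNa]; move: Lw; rewrite (count_eball_annulus w a0 ae).
  by rewrite lt0n; apply: contraTneq => ->; rewrite addn0; apply/negP.
apply: le_trans (prob_count_ge1 mB bB) _.
rewrite lee_fin leb2_annulus ?(le_trans a0) // -!mulrA.
apply: ler_wpM2l; first exact: ltW.
by apply: ler_wpM2l; [exact: pi_ge0|nra].
Qed.

Hypothesis L_gt0 : (0 < L)%N.

Lemma prob_RL_le_event0 : P (RL_le_event 0) = 0%E.
Proof.
have mB := eball_measurable (0 : R); have bB := eball_bounded (0 : R).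
rewrite prob_RL_le_event //; apply/eqP; rewrite eq_le measure_ge0 andbT.
apply: (@le_trans _ _ (P [set w | (1 <= N w (eball 0))%N])).
  apply: le_measure; rewrite ?inE; try exact: count_ge_measurable.
  by move=> w; exact: leq_trans.
apply: le_trans (prob_count_ge1 mB bB) _.
by rewrite leb2_eball // expr0n !mulr0.
Qed.

Variables (alpha beta gamma q : R).
Hypotheses (alpha_gt2 : 2 < alpha) (beta_gt0 : 0 < beta) (gamma_gt0 : 0 < gamma)
  (q_gt0 : 0 < q).
Let c := 2 * pi * q * lam / (alpha - 2).
Let r0 := Num.sqrt (gamma / (beta * c)).

Let c_gt0 : 0 < c.
Proof. by rewrite divr_gt0 ?subr_gt0 // !mulr_gt0 // pi_gt0. Qed.

Lemma SIRt_ge_event :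
  [set w | beta / gamma <= SIRt alpha q lam (RL N L w)] = RL_le_event r0 `\` RL_le_event 0.
Proof.
have r00 : 0 <= r0 by exact: sqrtr_ge0.
apply/seteqP; split=> w /=; rewrite SIRt_geP ?RL_ge0 ?(lt_trans _ alpha_gt2) // -/c -/r0.
  move=> [RL0 RLr0]; have Sw : S w !=set0.
    by apply/set0P; apply: contraTneq RL0 => Sw0; rewrite /RL -/(S w) Sw0 inf0 ltxx.
  by rewrite !RL_le_eventP //; split=> [//|[_]]; rewrite leNgt RL0.
rewrite !RL_le_eventP // => -[[Sw RLr0] NRL0]; split=> //.
by rewrite lt_neqAle RL_ge0 andbT eq_sym; apply/eqP => RL0; apply: NRL0; rewrite RL0.
Qed.

Lemma mean_count_disc : lam * fine (leb2 (eball r0)) = (alpha - 2) / (2 * q * beta / gamma).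
Proof.
rewrite leb2_eball ?sqrtr_ge0 //= sqr_sqrtr; last by rewrite ltW // divr_gt0 // mulr_gt0.
have := pi_gt0 R; rewrite /c; move: (@pi R) => p p_gt0.
by field; rewrite ?gt_eqF ?subr_gt0 ?pnatr_eq0.
Qed.

Lemma prob_SIRt_ge : P [set w | beta / gamma <= SIRt alpha q lam (RL N L w)] =
  (1 - \sum_(l < L) poisson_mass ((alpha - 2) / (2 * q * beta / gamma)) l)%:E.
Proof.
have mZ := RL_le_event_measurable 0; have mB := RL_le_event_measurable r0.
have BZ0 : P (RL_le_event r0 `\` (RL_le_event r0 `\` RL_le_event 0)) = 0%E.
  rewrite setDDr setDv set0U.
  exact: subset_measure0 (measurableI _ _ mB mZ) mZ (@subIsetr _ _ _) prob_RL_le_event0.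
rewrite SIRt_ge_event; transitivity (P (RL_le_event r0)).
  exact: measure_subset_setD0 (measurableD mB mZ) mB (@subDsetl _ _ _) BZ0.
rewrite prob_RL_le_event ?sqrtr_ge0 // prob_count_ge ?mean_count_disc //.
  exact: eball_measurable.
exact: eball_bounded.
Qed.

End poisson_counts.

Theorem proposition1 (R : realType) (d : measure_display) (Omega : measurableType d)
    (P : probability Omega R) (lam : R) (N : Omega -> set (R * R) -> nat)
    (L : nat) (alpha gamma beta q : R) :
  0 < lam -> is_hPPP P lam N -> (1 <= L)%N ->
  2 < alpha -> 0 < gamma -> 0 < beta -> 0 < q -> q <= 1 ->
  let t := (alpha - 2) / (2 * q * beta / gamma) in
  P [set w | beta / gamma <= SIRt alpha q lam (RL N L w)] =
  (1 - \sum_(l < L) expR (- t) * t ^+ l / (l`!)%:R)%:E.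
Proof.
move=> lam_gt0 hP L_gt0 alpha_gt2 gamma_gt0 beta_gt0 q_gt0 _ t.
exact: (prob_SIRt_ge hP lam_gt0 L_gt0 alpha_gt2 beta_gt0 gamma_gt0 q_gt0).
Qed.
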